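(* Let $n,k$ be natural numbers with $2k\le n$, and let $N_{n,k}$ be the reflexive graph on vertex set $\{1,\dots,n\}$ with edge set $\{\{i,j\}:1\le i\le j\le n\}\setminus\{\{1,2\},\{3,4\},\dots,\{2k-1,2k\}\}$. Every proper homomorphic image of $N_{n,k}$ (i.e. every reflexive graph $H$ for which there is a non-injective surjective homomorphism $N_{n,k}\to H$) is isomorphic to $N_{m,l}$ for some $m,l$ with $2l<m$.
   Context: Graphs here are reflexive: a set with a symmetric edge relation having a loop at every vertex. A homomorphism maps edges to edges (and may collapse edges or non-edges to single vertices). The graphs $N_{n,k}$ are called subcomplete; $N_{2k,k}$ are proper subcomplete and $N_{n,k}$ with $2k<n$ are partial subcomplete. *)

From mathcomp Require Import all_boot.
Set Implicit Arguments. Unset Strict Implicit. Unset Printing Implicit Defensive.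

Definition reflexive_graph (T : finType) (e : rel T) : Prop :=
  reflexive e /\ symmetric e.

Definition is_hom (T U : finType) (e : rel T) (e' : rel U) (f : T -> U) : Prop :=
  forall x y, e x y -> e' (f x) (f y).

Definition is_iso (T U : finType) (e : rel T) (e' : rel U) (f : T -> U) : Prop :=
  bijective f /\ forall x y, e' (f x) (f y) = e x y.

(* The subcomplete graph N_{n,k} on vertex set 'I_n, where vertex i : 'I_n
   stands for i+1 in {1,...,n}.  The missing edges {2t-1,2t} (1 <= t <= k)
   become, 0-based, {2s, 2s+1} for s < k, i.e. distinct vertices i, j with
   i./2 = j./2 < k. *)
Definition N_edge (n k : nat) : rel 'I_n :=
  fun i j => (i == j) || ~~ ((i./2 == j./2) && (i./2 < k)).
Arguments N_edge : clear implicits.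

From mathcomp Require Import all_boot fingroup perm zify.
Set Implicit Arguments. Unset Strict Implicit. Unset Printing Implicit Defensive.

(* A reflexive graph is isomorphic to some N_{m,l} with 2l < m exactly when its
   non-edges form a matching and some vertex is adjacent to every vertex.
   Both properties pass to a non-injective surjective image of N_{n,k}: a
   non-edge of the image lifts to a non-edge of N_{n,k}, and a vertex with two
   preimages x != y is universal, because no vertex of N_{n,k} is non-adjacent
   to both x and y.  The converse is an induction on the number of non-edges:
   adding the missing edge {a, b} yields, by induction, a copy of N_{m,l} in
   which a and b are universal, hence sit at positions >= 2l; a permutation
   fixing 0, ..., 2l-1 moves them to 2l and 2l+1, which is N_{m,l+1}. *)

Definition nonedge_matching (T : finType) (e : rel T) : Prop :=
  forall u v w, ~~ e u v -> ~~ e u w -> v = w.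

Lemma eq_half (i l : nat) : (i./2 == l) = (i == 2 * l) || (i == (2 * l).+1).
Proof. by apply/eqP/orP => [?|[] /eqP]; lia. Qed.

Section Subcomplete.
Variables m l : nat.
Implicit Types i j k p q : 'I_m.

Lemma N_edge_sym : symmetric (N_edge m l).
Proof.
move=> i j; rewrite /N_edge [j == i]eq_sym.
by case: (eqVneq i./2 j./2) => [->|ne] //; rewrite (negbTE ne) eq_sym (negbTE ne).
Qed.

Lemma N_edge_matching : nonedge_matching (N_edge m l).
Proof.
move=> i j k; rewrite /N_edge !negb_or !negbK -!(inj_eq (@ord_inj m)).
move=> /andP[/eqP ? /andP[/eqP ? ?]] /andP[/eqP ? /andP[/eqP ? ?]].
by apply: ord_inj; lia.
Qed.

Lemma N_edgeS i j :
  N_edge m l.+1 i j = N_edge m l i j && ~~ [&& i != j, i./2 == l & j./2 == l].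
Proof.
rewrite /N_edge; case: eqP => //= _; rewrite ltnS leq_eqVlt.
by case: (i./2 =P j./2) => [->|ne] /=; [rewrite andbb negb_or andbC | lia].
Qed.

Lemma N_edge_high i j : 2 * l <= i -> N_edge m l i j.
Proof. by rewrite /N_edge => ?; apply/orP; right; lia. Qed.

Lemma N_edge_universal i : 2 * l <= m -> (forall j, N_edge m l i j) -> 2 * l <= i.
Proof.
move=> hlm hi; rewrite leqNgt; apply/negP => ilt.
have hp : (i./2).*2 + ~~ odd i < m by lia.
by move: (hi (Ordinal hp)); rewrite /N_edge -val_eqE /=; lia.
Qed.

Lemma perm_high (h : {perm 'I_m}) i :
  (forall j, j < 2 * l -> h j = j) -> 2 * l <= i -> 2 * l <= h i.
Proof.
move=> hfix hi; rewrite leqNgt; apply/negP => hlt.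
have /perm_inj hii := hfix _ hlt.
by move: hlt; rewrite hii ltnNge hi.
Qed.

Lemma N_edge_perm (h : {perm 'I_m}) i j :
  (forall k, k < 2 * l -> h k = k) -> N_edge m l (h i) (h j) = N_edge m l i j.
Proof.
move=> hfix; case: (ltnP i (2 * l)) => hi; last by rewrite !N_edge_high ?perm_high.
case: (ltnP j (2 * l)) => hj; first by rewrite !hfix.
by rewrite N_edge_sym [RHS]N_edge_sym !N_edge_high ?perm_high.
Qed.

Lemma perm_onto_pair p q : p != q -> 2 * l <= p -> 2 * l <= q ->
  exists h : {perm 'I_m},
    [/\ forall i, i < 2 * l -> h i = i, h p = 2 * l :> nat & h q = (2 * l).+1 :> nat].
Proof.
move=> npq hp hq.
have lt1 : (2 * l).+1 < m.
  by move: npq (ltn_ord p) (ltn_ord q); rewrite -val_eqE /=; lia.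
pose o0 := Ordinal (ltnW lt1); pose o1 := Ordinal lt1.
have fix_low (x y i : 'I_m) : 2 * l <= x -> 2 * l <= y -> i < 2 * l -> tperm x y i = i.
  move=> hx hy hi; apply: tpermD; apply: contraTneq hi => <-; by rewrite -leqNgt.
pose s := tperm p o0.
have hsq : 2 * l <= s q by rewrite /s; case: tpermP.
have sq0 : s q != o0 by rewrite -(tpermL p o0) (inj_eq perm_inj) eq_sym.
have o10 : o1 != o0 by rewrite -val_eqE /= (gtn_eqF (ltnSn _)).
exists (s * tperm (s q) o1)%g; split => [i hi||]; rewrite permM.
- have si : s i = i by apply: fix_low; rewrite ?leqnn.
  by rewrite si fix_low ?leqnSn.
- by rewrite tpermL tpermD // eq_sym.
- by rewrite tpermL.
Qed.

End Subcomplete.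

Definition nonedges (T : finType) (e : rel T) := [set x : T * T | ~~ e x.1 x.2].

Lemma sub_nonedge_matching (T : finType) (e e' : rel T) :
  subrel e e' -> nonedge_matching e -> nonedge_matching e'.
Proof. by move=> sub hm u v w /(contra (sub _ _)) + /(contra (sub _ _)); apply: hm. Qed.

Lemma N_edge_iso_complete (T : finType) (e : rel T) :
  (forall x y, e x y) -> is_iso e (N_edge #|T| 0) enum_rank.
Proof.
move=> he; split; first exact: Bijective enum_rankK enum_valK.
by move=> x y; rewrite /N_edge ltn0 andbF orbT he.
Qed.

Section AddEdge.
Variables (T : finType) (e : rel T) (a b : T).
Hypotheses (hr : reflexive e) (hs : symmetric e) (nab : ~~ e a b).

Definition add_edge : rel T :=
  [rel x y | e x y || ((x == a) && (y == b)) || ((x == b) && (y == a))].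

Lemma add_edge_sub : subrel e add_edge.
Proof. by move=> x y; rewrite /add_edge /= => ->. Qed.

Lemma add_edge_refl : reflexive add_edge.
Proof. by move=> x; rewrite /add_edge /= hr. Qed.

Lemma add_edge_sym : symmetric add_edge.
Proof. by move=> x y; rewrite /add_edge /= hs orbAC andbC [(y == b) && _]andbC. Qed.

Lemma card_nonedges_add_edge : #|nonedges add_edge| < #|nonedges e|.
Proof.
apply: proper_card; apply/properP; split.
  by apply/subsetP => -[x y]; rewrite !inE /=; apply/contra/add_edge_sub.
by exists (a, b); rewrite !inE /add_edge /= ?eqxx ?orbT.
Qed.

Lemma add_edge_universal x v :
  nonedge_matching e -> (x == a) || (x == b) -> add_edge x v.
Proof.
move=> hm; case/boolP: (e x v) => [/add_edge_sub //|nxv].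
have nba : ~~ e b a by rewrite hs.
case/orP=> /eqP exa; move: nxv; rewrite exa => nv.
  by rewrite /add_edge /= (hm _ _ _ nv nab) !eqxx orbT.
by rewrite /add_edge /= (hm _ _ _ nv nba) !eqxx !orbT.
Qed.

Lemma add_edge_remove x y :
  add_edge x y && ~~ [&& x != y, (x == a) || (x == b) & (y == a) || (y == b)] = e x y.
Proof.
have nba : ~~ e b a by rewrite hs.
have ab : a != b by apply: contraNneq nab => ->.
rewrite /add_edge /=; case: (eqVneq x y) => [<-|nxy] /=; first by rewrite hr.
case: (eqVneq x a) nxy => [->|xa] nxy.
  rewrite (negbTE ab) [y == a]eq_sym (negbTE nxy) /= orbF.
  by case: (eqVneq y b) => [->|]; rewrite ?(negbTE nab) ?orbF ?andbT.
case: (eqVneq x b) nxy => [->|xb] nxy.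
  case: (eqVneq y a) => [->|_]; first by rewrite (negbTE nba).
  by rewrite /= !orbF eq_sym nxy andbT.
by rewrite /= !orbF andbT.
Qed.

End AddEdge.

Lemma N_edge_iso_remove_edge (T : finType) (e : rel T) (a b u : T) l
    (g : T -> 'I_#|T|) :
  reflexive e -> symmetric e -> nonedge_matching e -> ~~ e a b -> (forall v, e u v) ->
  2 * l < #|T| -> is_iso (add_edge e a b) (N_edge #|T| l) g ->
  2 * l.+1 < #|T| /\ exists g' : T -> 'I_#|T|, is_iso e (N_edge #|T| l.+1) g'.
Proof.
move=> hr hs hm nab hu hl [gbij hiso].
have ginj := bij_inj gbij.
have high x : (forall v, add_edge e a b x v) -> 2 * l <= g x.
  move=> hx; apply: N_edge_universal => [|j]; first exact: ltnW.
  by case: gbij => ginv _ gK; rewrite -[j]gK hiso.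
have hga : 2 * l <= g a by apply: high => v; apply: add_edge_universal; rewrite ?eqxx.
have hgb : 2 * l <= g b by apply: high => v; apply: add_edge_universal; rewrite ?eqxx ?orbT.
have hgu : 2 * l <= g u by apply: high => v; apply: add_edge_sub.
have gab : g a != g b by rewrite (inj_eq ginj); apply: contraNneq nab => ->.
have [h [hfix ha hb]] := perm_onto_pair gab hga hgb.
have hginj : injective (h \o g) := inj_comp perm_inj ginj.
have hhalf x : ((h (g x))./2 == l) = (x == a) || (x == b).
  by rewrite eq_half -hb -ha !(inj_eq (@ord_inj _)) !(inj_eq hginj).
have hlt : 2 * l.+1 < #|T|.
  have hua : u != a by apply: contraNneq nab => <-.
  have hub : u != b by apply: contraNneq nab => <-; rewrite hs.
  have : (h (g u) : nat) != h (g a) by rewrite (inj_eq (@ord_inj _)) (inj_eq hginj).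
  have : (h (g u) : nat) != h (g b) by rewrite (inj_eq (@ord_inj _)) (inj_eq hginj).
  by move: (ltn_ord (h (g u))) (perm_high hfix hgu); rewrite ha hb; lia.
split=> //; exists (h \o g); split.
  exact: bij_comp (injF_bij perm_inj) gbij.
move=> x y /=.
by rewrite N_edgeS N_edge_perm // hiso !hhalf (inj_eq hginj) add_edge_remove.
Qed.

Lemma N_edge_iso_of_nonedge_matching (T : finType) (e : rel T) (u : T) :
  reflexive e -> symmetric e -> nonedge_matching e -> (forall v, e u v) ->
  exists l, 2 * l < #|T| /\ exists g : T -> 'I_#|T|, is_iso e (N_edge #|T| l) g.
Proof.
move=> + + + hu; have [N] := ubnP #|nonedges e|.
elim: N e hu => // N IH e hu hN hr hs hm.
case: (set_0Vmem (nonedges e)) => [e0|[[a b]]]; last first.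
  rewrite inE /= => nab.
  have [l [hl [g hg]]] := IH (add_edge e a b) (fun v => add_edge_sub a b (hu v))
    (leq_trans (card_nonedges_add_edge nab) (ltnSE hN)) (add_edge_refl a b hr) (add_edge_sym a b hs)
    (sub_nonedge_matching (add_edge_sub a b) hm).
  by exists l.+1; apply: N_edge_iso_remove_edge hg.
exists 0; split; first by apply/card_gt0P; exists u.
exists enum_rank; apply: N_edge_iso_complete => x y.
by apply: contraT => nxy; rewrite -(in_set0 (x, y)) -e0 inE.
Qed.

Lemma hom_image_nonedge_matching (T U : finType) (e : rel T) (e' : rel U) (f : T -> U) :
  is_hom e e' f -> (forall y, exists x, f x = y) ->
  nonedge_matching e -> nonedge_matching e'.
Proof.
move=> hf fsurj hm u v w.
have [x <-] := fsurj u; have [y <-] := fsurj v; have [z <-] := fsurj w.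
by move=> /(contra (hf _ _)) nxy /(contra (hf _ _)) nxz; rewrite (hm _ _ _ nxy nxz).
Qed.

Lemma hom_merge_universal (T U : finType) (e : rel T) (e' : rel U) (f : T -> U) x y :
  symmetric e -> nonedge_matching e -> is_hom e e' f -> (forall y, exists x, f x = y) ->
  x != y -> f x = f y -> forall v, e' (f x) v.
Proof.
move=> hs hm hf fsurj nxy fxy v; have [z <-] := fsurj v.
case/boolP: (e x z) => [/hf //|nxz]; case/boolP: (e y z) => [/hf|nyz]; first by rewrite fxy.
by move: nxz nyz; rewrite ![e _ z]hs => nzx nzy; rewrite (hm _ _ _ nzx nzy) eqxx in nxy.
Qed.

Theorem proposition3p2 (n k : nat) (hnk : 2 * k <= n)
  (T : finType) (e : rel T) (He : reflexive_graph e)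
  (f : 'I_n -> T) (Hhom : is_hom (N_edge n k) e f)
  (Hsurj : forall y : T, exists x : 'I_n, f x = y)
  (Hninj : ~ injective f) :
  exists m l : nat, 2 * l < m /\
    exists g : T -> 'I_m, is_iso e (N_edge m l) g.
Proof.
case: He => hr hs.
have /injectivePn[x [y nxy fxy]] : ~~ injectiveb f by apply/injectiveP.
have hmN := @N_edge_matching n k.
have hm := hom_image_nonedge_matching Hhom Hsurj hmN.
have hu := hom_merge_universal (@N_edge_sym n k) hmN Hhom Hsurj nxy fxy.
have [l [hl [g hg]]] := N_edge_iso_of_nonedge_matching hr hs hm hu.
by exists #|T|, l; split => //; exists g.
Qed.
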